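(* Let $q$ be a prime power, $n\ge1$, and let $f(x)\neq x-1$ be a primitive polynomial of degree $n$ over $\mathbb{F}_q$. Then the polynomial $$F(x)=\frac{f\big(x^{q^n}+x^{q^n-1}\big)}{f(x+1)}$$ of degree $n(q^n-1)$ is irreducible over $\mathbb{F}_q$.
   Context: A primitive polynomial of degree $n$ over $\mathbb{F}_q$ is a monic irreducible polynomial of degree $n$ whose roots generate the multiplicative group $\mathbb{F}_{q^n}^*$. *)

From HB Require Import structures.
From mathcomp Require Import all_boot all_order all_algebra all_field.
From mathcomp Require Export qfpoly.

From HB Require Import structures.
From mathcomp Require Import all_boot all_order all_algebra all_field qfpoly.
From mathcomp Require Import ring.
Import GRing.Theory.
Local Open Scope ring_scope.

(* Let z be a root of G / H in an extension of F_q, and b := z^Q + z^(Q-1)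
   with Q = q^n; then b is a root of f, hence of multiplicative order Q - 1,
   and z^Q (z + 1) = b z.  For v := (z - b + 1) / z the Frobenius x |-> x^Q
   acts by v^Q = v / b, so v^(Q^j) = v / b^j.  As b lies in F_q(z), the degree
   of z is e = m n, and x^(Q^m) = x on F_q(z) forces b^m = 1, i.e.
   m >= Q - 1: z has degree at least n (Q - 1) = deg (G / H).  Here v <> 0
   because z + 1 = b would make z a root of H as well, hence a multiple root
   of G, whereas G' = f'(x^Q + x^(Q-1)) * (-x^(Q-2)) does not vanish at z. *)

Lemma pnat_pchar_expn_card (F : finFieldType) (A : lalgType F) k :
  [pchar A].-nat (#|F| ^ k)%N.
Proof.
have [p _ pF] := finPcharP F.
rewrite (eq_pnat _ (pchar_lalg A)) pnatX (eq_pnat _ (pcharf_eq pF)).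
by rewrite (card_pprimeChar pF) pnatX pnat_id ?orbT // (pcharf_prime pF).
Qed.

Lemma expf_card_dim (F : finFieldType) (L : fieldExtType F) (K : {subfield L}) x :
  x \in K -> x ^+ (#|F| ^ \dim K) = x.
Proof. by rewrite Fermat's_little_theorem => /eqP. Qed.

Lemma minPoly_monic_irreducible (F : fieldType) (L : fieldExtType F)
    (f : {poly F}) (b : L) :
  f \is monic -> irreducible_poly f -> root (map_poly (in_alg L) f) b ->
  minPoly 1 b = map_poly (in_alg L) f.
Proof.
move=> f_monic [_ f_irr] fb.
have [r Dr] := polyOver1P (minPolyOver 1 b).
have : minPoly 1 b %| map_poly (in_alg L) f.
  by apply: minPoly_dvdp => //; apply/polyOver1P; exists f.
rewrite Dr dvdp_map => rf.
have r_monic : r \is monic by rewrite -(map_monic (in_alg L)) -Dr monic_minPoly.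
have r_size : size r != 1%N by rewrite -(size_map_poly (in_alg L)) -Dr size_minPoly.
have /eqP <- // : r == f by rewrite -eqp_monic // f_irr.
Qed.

Lemma root_map_dvdp {F : fieldType} {L : fieldExtType F} {p h : {poly F}} {x : L} :
  p %| h -> root (map_poly (in_alg L) p) x -> root (map_poly (in_alg L) h) x.
Proof. by move=> /dvdpP[c ->] px; rewrite rmorphM rootM px orbT. Qed.

Lemma root_deriv_mul (R : comNzRingType) (p q : {poly R}) x :
  root p x -> root q x -> root (p * q)^`() x.
Proof.
by move=> /rootP px /rootP qx; rewrite derivM rootE !hornerE px qx !mulr0 mul0r addr0.
Qed.

Lemma subr_dvdp_comp (R : idomainType) (p a b : {poly R}) :
  (a - b) %| (p \Po a) - (p \Po b).
Proof.
elim/poly_ind: p => [|p c IH]; first by rewrite !comp_poly0 subrr dvdp0.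
rewrite !comp_polyD !comp_polyM !comp_polyX !comp_polyC.
have -> : (p \Po a) * a + c%:P - ((p \Po b) * b + c%:P)
    = ((p \Po a) - (p \Po b)) * a + (p \Po b) * (a - b) by ring.
by apply: dvdp_add; [apply: dvdp_mulr | apply: dvdp_mull].
Qed.

Lemma deriv_XnDXn1 (R : nzRingType) (Q : nat) : (1 < Q)%N -> Q%:R = 0 :> R ->
  ('X^Q + 'X^(Q - 1))^`() = - 'X^(Q - 2) :> {poly R}.
Proof.
move=> Q_gt1 Q0; have Q0' : Q%:R = 0 :> {poly R} by rewrite -polyC_natr Q0.
rewrite derivD !derivXn -mulr_natr Q0' mulr0 add0r -mulr_natr natrB ?(ltnW Q_gt1) //.
by rewrite Q0' sub0r mulrN1 -subn1 -subnDA.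
Qed.

Lemma expr_twist (K : fieldType) (Q : nat) (z b : K) :
  [pchar K].-nat Q -> z != 0 -> b != 0 -> b ^+ Q = b -> z ^+ Q * (z + 1) = b * z ->
  ((z - b + 1) / z) ^+ Q = (z - b + 1) / z / b.
Proof.
move=> pQ z0 b0 bQ zQ; rewrite expr_div_n !exprDn_pchar // exprNn_pchar // bQ expr1n.
rewrite -mulrA -invfM; apply/eqP; rewrite eqr_div ?mulf_neq0 ?expf_neq0 //.
rewrite -subr_eq0; set w := z ^+ Q in zQ *.
have -> : (w - b + 1) * (z * b) - (z - b + 1) * w = (b - 1) * (w * (z + 1) - b * z) by ring.
by rewrite zQ subrr mulr0.
Qed.

Lemma expr_twist_iter {K : fieldType} {Q : nat} {v b : K} :
  b ^+ Q = b -> v ^+ Q = v / b -> forall j, v ^+ (Q ^ j) = v / b ^+ j.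
Proof.
move=> bQ vQ; elim=> [|j IH]; first by rewrite expn0 expr1 expr0 invr1 mulr1.
by rewrite expnSr exprM IH expr_div_n vQ -exprM mulnC exprM bQ exprS invfM mulrA.
Qed.

Section PrimitiveRoots.

Context {F : finFieldType} {L : fieldExtType F} {n : nat} {f : {poly F}}.
Hypotheses (n_gt0 : (0 < n)%N) (size_f : size f = n.+1) (f_prim : primitive_poly f).

Local Notation Q := (#|F| ^ n)%N.
Local Notation fL := (map_poly (in_alg L) f).

Lemma expn_card_gt1 : (1 < Q)%N.
Proof. by rewrite -[1%N](expn0 #|F|) ltn_exp2l ?finNzRing_gt1. Qed.

Let f_monic_irr : monic_irreducible_poly f. Proof. exact: primitive_mi. Qed.

Let f_dvd_XQ1 : f %| 'X^(Q - 1) - 1.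
Proof.
have [_ + _] := primitive_polyP _ f_prim.
by rewrite card_primitive_qpoly // size_f subn1.
Qed.

Let f_ndvd_Xm1 m : (0 < m < Q - 1)%N -> ~~ (f %| 'X^m - 1).
Proof.
have [_ _] := primitive_polyP _ f_prim.
by rewrite card_primitive_qpoly // size_f subn1; apply.
Qed.

Lemma minPoly_primitive_root b : root fL b -> minPoly 1 b = fL.
Proof. by case: f_monic_irr => f_irr f_monic; apply: minPoly_monic_irreducible. Qed.

Lemma dim_adjoin_primitive_root b : root fL b -> \dim <<1; b>> = n.
Proof.
move=> fb; rewrite dim_Fadjoin dimv1 muln1.
by have := size_minPoly 1 b; rewrite minPoly_primitive_root // size_map_poly size_f => -[].
Qed.

Lemma primitive_root_expQ1 b : root fL b -> b ^+ (Q - 1) = 1.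
Proof.
move=> fb; apply/eqP; rewrite -subr_eq0.
have := root_map_dvdp f_dvd_XQ1 fb.
by rewrite rmorphB rmorph1 /= map_polyXn rootE !hornerE.
Qed.

Lemma primitive_root_neq0 b : root fL b -> b != 0.
Proof.
move=> fb; apply/eqP => b0; have := primitive_root_expQ1 b fb.
by rewrite b0 expr0n subn_eq0 leqNgt expn_card_gt1 => /eqP; rewrite eq_sym oner_eq0.
Qed.

Lemma primitive_root_order b m :
  root fL b -> (0 < m)%N -> b ^+ m = 1 -> (Q - 1 <= m)%N.
Proof.
move=> fb m_gt0 bm; rewrite leqNgt; apply/negP => m_lt.
apply: (negP (f_ndvd_Xm1 m _)); first by rewrite m_gt0.
rewrite -(dvdp_map (in_alg L)) -(minPoly_primitive_root b fb); apply: minPoly_dvdp.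
  by apply/polyOver1P; exists ('X^m - 1).
by rewrite rmorphB rmorph1 /= map_polyXn rootE !hornerE bm subrr.
Qed.

Lemma primitive_root_simple b : root fL b -> ~~ root (fL^`()) b.
Proof.
move=> fb; pose galL := FinSplittingFieldType F L.
have /and3P[_ sep _] := finField_galois (subvf (1%AS : {subfield galL})).
have := separable_root_der (1%AS : {subfield galL}) b.
rewrite (separableP sep b (memvf (b : galL))) /=.
have mb : minPoly (1%AS : {subfield galL}) b = fL := minPoly_primitive_root b fb.
by rewrite mb.
Qed.

Lemma dim_adjoin_ge z :
  root fL (z ^+ Q + z ^+ (Q - 1)) -> z + 1 != z ^+ Q + z ^+ (Q - 1) ->
  (n * (Q - 1) <= \dim <<1; z>>)%N.
Proof.
set b := _ + _ => fb zb; have Q_gt1 := expn_card_gt1.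
have QE : Q = (Q - 1).+1 by rewrite subn1 prednK // ltnW.
have b0 := primitive_root_neq0 b fb.
have bE : b = z ^+ (Q - 1) * (z + 1) by rewrite mulrDr mulr1 -exprSr -QE.
have z0 : z != 0.
  by apply: contra_neq b0 => z0; rewrite bE z0 expr0n subn_eq0 leqNgt Q_gt1 mul0r.
have bQ : b ^+ Q = b by rewrite QE exprSr primitive_root_expQ1 // mul1r.
have zQ : z ^+ Q * (z + 1) = b * z by rewrite bE mulrAC -exprSr -QE.
set v := (z - b + 1) / z.
have v0 : v != 0 by rewrite mulf_neq0 ?invr_neq0 // addrAC subr_eq0.
have vQ : v ^+ Q = v / b by apply: expr_twist; rewrite ?pnat_pchar_expn_card.
set e := \dim <<1; z>>.
have zK : z \in <<1; z>>%VS := memv_adjoin 1 z.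
have bK : b \in <<1; z>>%VS by rewrite rpredD ?rpredX.
have [m eE] : exists m, e = (m * n)%N.
  apply/dvdnP; rewrite -(dim_adjoin_primitive_root b fb).
  by apply: field_dimS; rewrite sub_adjoin1v.
have m_gt0 : (0 < m)%N by move: (adim_gt0 <<1; z>>%AS); rewrite -/e eE muln_gt0 => /andP[].
(* the Frobenius of [F(z)] fixes [z] and [b], hence [v] *)
have vQm : v ^+ (Q ^ m) = v.
  rewrite -expnM mulnC -eE expr_div_n !exprDn_pchar ?pnat_pchar_expn_card //.
  by rewrite exprNn_pchar ?pnat_pchar_expn_card // expr1n !expf_card_dim.
have bm : b ^+ m = 1.
  have : v * (b ^+ m)^-1 = v * 1 by rewrite mulr1 -[RHS]vQm (expr_twist_iter bQ vQ).
  by move/(mulfI v0)/eqP; rewrite invr_eq1 => /eqP.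
by rewrite eE mulnC leq_mul2r (primitive_root_order b m) ?orbT.
Qed.

Lemma comp_XnDXn1_simple_root z :
  root fL (z ^+ Q + z ^+ (Q - 1)) ->
  ~~ root (fL \Po ('X^Q + 'X^(Q - 1)))^`() z.
Proof.
move=> fb; have Q_gt1 := expn_card_gt1.
have QL0 : Q%:R = 0 :> L.
  apply/eqP; apply: contraTT Q_gt1; rewrite natf_neq0_pchar.
  by move=> /(pnat_1 (pnat_pchar_expn_card _ L n)) ->.
have z0 : z != 0.
  apply: contra_neq (primitive_root_neq0 _ fb) => ->.
  by rewrite !expr0n gtn_eqF ?(ltnW Q_gt1) // subn_eq0 leqNgt Q_gt1 addr0.
rewrite deriv_comp deriv_XnDXn1 //.
rewrite rootE hornerM horner_comp !hornerE mulf_eq0 negb_or -rootE.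
by rewrite primitive_root_simple ?oppr_eq0 ?expf_neq0.
Qed.

Local Notation G := (f \Po ('X^Q + 'X^(Q - 1))).
Local Notation H := (f \Po ('X + 1)).

Lemma primitive_poly_root1 : f != 'X - 1 -> ~~ root f 1.
Proof.
move=> f_neq; apply: contra f_neq => /factor_theorem[c f_eq].
have [[_ f_irr] f_monic] := f_monic_irr.
have : 'X - 1%:P %= f by apply: f_irr; rewrite ?size_XsubC // f_eq dvdp_mull.
by rewrite eqp_monic ?monicXsubC // polyC1 eq_sym.
Qed.

(* [H] divides [X^Q - X] and is coprime to [X], and [G - H] is a multiple of
   [(X^Q + X^(Q-1)) - (X + 1) = (X^Q - X) + (X^(Q-1) - 1)]. *)
Lemma dvdp_comp_XaddC : f != 'X - 1 -> H %| G.
Proof.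
move=> f_neq; have Q_gt1 := expn_card_gt1.
have QE : Q = (Q - 1).+1 by rewrite subn1 prednK // ltnW.
have H_XQ : H %| 'X^Q - 'X.
  have : f %| 'X^Q - 'X.
    by rewrite [in 'X^Q]QE exprSr -[X in _ - X]mul1r -mulrBl dvdp_mulr.
  move/(dvdp_comp_poly ('X + 1)); rewrite comp_polyB comp_Xn_poly comp_polyX.
  by rewrite exprDn_pchar ?pnat_pchar_expn_card // expr1n opprD addrACA subrr addr0.
have H_X : coprimep H 'X.
  rewrite -['X]subr0 -polyC0 coprimep_XsubC rootE horner_comp !hornerE oppr0 add0r.
  exact: primitive_poly_root1.
have H_XQ1 : H %| 'X^(Q - 1) - 1.
  by rewrite -(Gauss_dvdpr _ H_X) mulrBr mulr1 -exprS -QE.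
have gH : H %| ('X^Q + 'X^(Q - 1)) - ('X + 1).
  by rewrite opprD addrACA; apply: dvdp_add.
have GH : H %| G - H := dvdp_trans gH (subr_dvdp_comp _ f _ _).
by rewrite -(subrK H G); apply: dvdp_add GH (dvdpp H).
Qed.

Lemma size_divp_comp_XaddC : size (G %/ H) = (n * (Q - 1)).+1.
Proof.
have Q_gt1 := expn_card_gt1.
have size_g : size ('X^Q + 'X^(Q - 1) : {poly F}) = Q.+1.
  by rewrite size_polyDl !size_polyXn // ltnS ltn_subrL (ltnW Q_gt1).
have size_G : size G = (n * Q).+1.
  have := size_comp_poly f ('X^Q + 'X^(Q - 1)); rewrite size_f size_g /=.
  case: (size G) => [/esym/eqP | k /= <-] //.
  by rewrite muln_eq0 !gtn_eqF // ltnW.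
have size_H : size H = n.+1 by rewrite size_comp_poly2 ?size_XaddC.
have H_neq0 : H != 0 by rewrite -size_poly_gt0 size_H.
rewrite size_divp // size_G size_H /= mulnBr muln1.
by rewrite subSn // leq_pmulr // ltnW.
Qed.

Lemma map_comp_XnDXn1 :
  map_poly (in_alg L) G = fL \Po ('X^Q + 'X^(Q - 1)).
Proof. by rewrite map_comp_poly rmorphD /= !map_polyXn. Qed.

(* A root [z] of [G / H] with [z + 1 = z^Q + z^(Q-1)] would also be a root of
   [H], hence a multiple root of [G]. *)
Lemma dim_adjoin_root_divp_comp z :
  f != 'X - 1 -> root (map_poly (in_alg L) (G %/ H)) z ->
  (n * (Q - 1) <= \dim <<1; z>>)%N.
Proof.
move=> f_neq Pz; have G_eq : G = (G %/ H) * H by rewrite divpK ?dvdp_comp_XaddC.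
have fb : root fL (z ^+ Q + z ^+ (Q - 1)).
  have := root_map_dvdp (dvdp_mulr H (dvdpp (G %/ H))) Pz.
  by rewrite -G_eq map_comp_XnDXn1 rootE horner_comp !hornerE.
apply: dim_adjoin_ge => //; apply/eqP => zb.
have Hz : root (map_poly (in_alg L) H) z.
  by rewrite map_comp_poly rootE horner_comp rmorphD /= map_polyX rmorph1 !hornerE zb.
have := comp_XnDXn1_simple_root _ fb; rewrite -map_comp_XnDXn1 G_eq rmorphM.
by rewrite root_deriv_mul.
Qed.

End PrimitiveRoots.

Lemma irreducible_adjoin_dim (F : finFieldType) (p : {poly F}) :
  (1 < size p)%N ->
  (forall (L : fieldExtType F) (z : L),
     root (map_poly (in_alg L) p) z -> ((size p).-1 <= \dim <<1; z>>)%N) ->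
  irreducible_poly p.
Proof.
move=> p_gt1 dim_ge; split=> // s s_neq1 sp.
have s_neq0 : s != 0.
  by apply: contraTneq sp => ->; rewrite dvd0p -size_poly_gt0 (ltnW p_gt1).
have [L [[|z rs] Ds _]] := FinSplittingFieldFor s_neq0.
  move: (eqp_size Ds); rewrite big_nil size_poly1 size_map_poly => /eqP.
  by rewrite (negbTE s_neq1).
have sz : root (map_poly (in_alg L) s) z.
  by rewrite (eqp_root Ds) big_cons rootM root_XsubC eqxx.
have [r Dr] := polyOver1P (minPolyOver 1 z).
have rs_dvd : r %| s.
  rewrite -(dvdp_map (in_alg L)) -Dr; apply: minPoly_dvdp => //.
  by apply/polyOver1P; exists s.
have size_r : size r = (\dim <<1; z>>).+1.
  by rewrite -(size_map_poly (in_alg L)) -Dr size_minPoly dim_Fadjoin dimv1 muln1.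
rewrite -dvdp_size_eqp // eqn_leq dvdp_leq -?size_poly_gt0 ?(ltnW p_gt1) //=.
apply: leq_trans (dvdp_leq s_neq0 rs_dvd); rewrite size_r -(prednK (ltnW p_gt1)) ltnS.
exact: dim_ge (root_map_dvdp sp sz).
Qed.

Theorem mainTheorem12 (F : finFieldType) (n : nat) (f : {poly F}) :
  (0 < n)%N ->
  size f = n.+1 ->
  primitive_poly f ->
  f != 'X - 1 ->
  let q := #|F| in
  let G := f \Po ('X^(q ^ n) + 'X^(q ^ n - 1)) in
  let H := f \Po ('X + 1) in
  [/\ H %| G, size (G %/ H) = (n * (q ^ n - 1)).+1 & irreducible_poly (G %/ H)].
Proof.
move=> n_gt0 size_f f_prim f_neq /=.
have size_P := size_divp_comp_XaddC n_gt0 size_f.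
split; [exact: dvdp_comp_XaddC | exact: size_P | apply: irreducible_adjoin_dim].
  by rewrite size_P ltnS muln_gt0 n_gt0 subn_gt0 (expn_card_gt1 n_gt0).
move=> L z Pz; rewrite size_P.
exact: dim_adjoin_root_divp_comp Pz.
Qed.
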